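(* Let $(X_i,Y_i)_{i\in[n+m]}$ be i.i.d. from a distribution $P_{XY}$ on $\mathcal X\times\mathcal Y$, where $(X_i,Y_i)_{i\in[n]}$ is the calibration sample and $(X_{n+i})_{i\in[m]}$ the test covariates. Let $C^\mu$ and $D^\mu$ be the estimated-probability rules described in the context, and assume that for every $x\in\mathcal X$ and all $0\le\mu_1<\mu_2$ we have $C^{\mu_1}(x)\subseteq C^{\mu_2}(x)$. Define $$\mu_\alpha=\min\left\{\mu\ge 0:\ \frac{\frac{1}{n+1}\left(\sum_{i=1}^n \mathbb 1\{Y_i\notin C^{\mu}(X_i)\}D^{\mu}(X_i)+1\right)}{\frac{1}{m}\left(1\vee\sum_{i=1}^m D^{\mu}(X_{n+i})\right)}\le\alpha\right\},$$ with $\mu_\alpha=\infty$ and $D^\infty\equiv 0$ if no such $\mu$ exists. Then $$\mathbb E\left[\frac{\sum_{i=1}^m \mathbb 1\{Y_{n+i}\notin C^{\mu_\alpha}(X_{n+i})\}D^{\mu_\alpha}(X_{n+i})}{1\vee\sum_{i=1}^m D^{\mu_\alpha}(X_{n+i})}\right]\le\alpha.$$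
   Context: Let $\alpha\in(0,1)$. $\mathcal I$ is a finite collection of subsets of $\mathcal Y$ (informative prediction sets) enumerated in a fixed lexicographic order, and $w:\mathcal I\to(0,B)$ is a bounded positive weight function. For each $x\in\mathcal X$ and $C\in\mathcal I$, $\hat p_C(x)\in[0,1]$ is a fixed (deterministic, e.g. obtained from independent training data) estimate of $\mathbb P(Y\in C\mid X=x)$. For $\mu\ge0$ define $\hat\ell_{x,C}(\mu)=w(C)\hat p_C(x)+\mu(\hat p_C(x)-(1-\alpha))$. $C^\mu(x)$ is a maximizer of $\hat\ell_{x,C}(\mu)$ over $C\in\mathcal I$, with ties broken in favor of the smallest weight $w(C)$ and then the smallest index in the fixed ordering; $D^\mu(x)=\mathbb 1\{\max_{C\in\mathcal I}\hat\ell_{x,C}(\mu)>0\}$. $a\vee b=\max(a,b)$. *)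

From HB Require Import structures.
From mathcomp Require Import all_boot all_order all_algebra.
From mathcomp Require Import all_classical all_reals all_analysis.
Set Implicit Arguments. Unset Strict Implicit. Unset Printing Implicit Defensive.
Import Order.TTheory GRing.Theory Num.Theory.
Local Open Scope ring_scope.
Local Open Scope classical_set_scope.

(* The collection of informative sets is indexed by 'I_k.+1 (nonempty,
   enumerated in the fixed order of the ordinals). *)

Definition lhat (R : numDomainType) (alpha w p mu : R) : R :=
  w * p + mu * (p - (1 - alpha)).

Definition prefer (R : realDomainType) (k : nat) (alpha : R)
  (w ph : 'I_k -> R) (mu : R) (i j : 'I_k) : bool :=
  (lhat alpha (w j) (ph j) mu < lhat alpha (w i) (ph i) mu)
  || ((lhat alpha (w i) (ph i) mu == lhat alpha (w j) (ph j) mu)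
      && ((w i < w j) || ((w i == w j) && (i < j)%N))).

(* index of C^mu(x), where ph i = phat_{C_i}(x) *)
Definition Cidx (R : realDomainType) (k : nat) (alpha : R)
  (w ph : 'I_k.+1 -> R) (mu : R) : 'I_k.+1 :=
  odflt ord0 [pick i | [forall j, (j != i) ==> prefer alpha w ph mu i j]].

Definition Dmu (R : realDomainType) (k : nat) (alpha : R)
  (w ph : 'I_k -> R) (mu : R) : bool :=
  [exists i, 0 < lhat alpha (w i) (ph i) mu].

Section Procedure.
Variables (R : realType) (X Y : Type) (k n m : nat) (alpha : R).
Variables (S : 'I_k.+1 -> set Y) (w : 'I_k.+1 -> R) (phat : 'I_k.+1 -> X -> R).

Definition Cset (mu : R) (x : X) : set Y :=
  S (Cidx alpha w (fun i => phat i x) mu).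
Definition Dv (mu : R) (x : X) : bool := Dmu alpha w (fun i => phat i x) mu.

Definition calib (i : 'I_n) : 'I_(n + m) := lshift m i.
Definition test (j : 'I_m) : 'I_(n + m) := rshift n j.

Definition mu_cond (xs : 'I_(n + m) -> X) (ys : 'I_(n + m) -> Y) (mu : R) : Prop :=
  ((\sum_(i < n) ((ys (calib i) \notin Cset mu (xs (calib i)))
                   && Dv mu (xs (calib i)))%:R + 1) / (n.+1)%:R)
  / (Num.max 1 (\sum_(j < m) (Dv mu (xs (test j)))%:R) / m%:R) <= alpha.

Definition is_mu_min xs ys (mu : R) : Prop :=
  0 <= mu /\ mu_cond xs ys mu /\
  (forall mu', 0 <= mu' -> mu_cond xs ys mu' -> mu <= mu').

(* mu_alpha : Some mu if the minimum exists, None stands for mu_alpha = oo *)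
Definition mu_alpha xs ys : option R :=
  match pselect (exists mu, is_mu_min xs ys mu) with
  | left H => Some (proj1_sig (cid H))
  | right _ => None
  end.

(* false discovery proportion on the test points; D^oo = 0 *)
Definition FDP xs ys : R :=
  match mu_alpha xs ys with
  | Some mu =>
      (\sum_(j < m) ((ys (test j) \notin Cset mu (xs (test j)))
                      && Dv mu (xs (test j)))%:R)
      / Num.max 1 (\sum_(j < m) (Dv mu (xs (test j)))%:R)
  | None => 0
  end.
End Procedure.

Definition iid (R : realType) (dO dZ : measure_display)
  (Omega : measurableType dO) (Z : measurableType dZ) (N : nat)
  (Pr : probability Omega R) (P : probability Z R) (Zs : 'I_N -> Omega -> Z) : Prop :=
  (forall i, measurable_fun setT (Zs i)) /\
  forall A : 'I_N -> set Z, (forall i, measurable (A i)) ->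
    fine (Pr (\bigcap_(i in [set: 'I_N]) (Zs i @^-1` A i)))
    = \prod_(i < N) fine (P (A i)).

Arguments FDP [R X Y k] n m alpha S w phat xs ys.

From Pilot Require Import Defs.
From HB Require Import structures.
From mathcomp Require Import all_boot all_order all_algebra.
From mathcomp Require Import all_fingroup.
From mathcomp Require Import all_classical all_reals all_analysis.
From mathcomp Require Import measurable_realfun.
From mathcomp.algebra_tactics Require Import ring lra.
Import Order.TTheory GRing.Theory Num.Theory.
Local Open Scope ring_scope.
Local Open Scope classical_set_scope.

Set Implicit Arguments. Unset Strict Implicit. Unset Printing Implicit Defensive.

(* For a test index [j], let [mu_j] be the least [mu >= 0] satisfying the
   condition defining [mu_alpha] once the test point [Z_(n+j)] is moved into
   the calibration sample, and let [H_j(i)] be the indicator that [Z_i] is a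
   false discovery at [mu_j], divided by the number of false discoveries at
   [mu_j] among [Z_1, ..., Z_n, Z_(n+j)].  As [C^mu] grows and [D^mu] shrinks
   with [mu], [mu_j = mu_alpha] whenever [Z_(n+j)] is a false discovery at
   [mu_alpha]; hence FDP <= alpha (n+1)/m * sum_j H_j(n+j).  The n+1 weights
   [H_j(i)] sum to at most 1, and exchanging [Z_i] with [Z_(n+j)] exchanges
   [H_j(i)] with [H_j(n+j)] without changing the law of the sample, so
   E H_j(n+j) <= 1/(n+1), and summing over j gives alpha.  [H_j] is
   measurable because [mu_j] is 0 or a root of one of finitely many affine
   functions of [mu], so finitely many measurable sign tests determine it. *)

Lemma measurable_bool_of_tests (d : measure_display) (T : measurableType d)
    (I : finType) (test : I -> T -> bool) (P : T -> bool) :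
  (forall i, measurable_fun setT (test i)) ->
  (forall t t', (forall i, test i t = test i t') -> P t = P t') ->
  measurable_fun setT P.
Proof.
move=> mtest Pdet; apply: (measurable_fun_bool true); rewrite setTI.
pose A := [set f : {ffun I -> bool} | exists t, P t /\ forall i, test i t = f i].
have -> : P @^-1` [set true] =
    \bigcup_(f in A) \bigcap_(i in [set: I]) (test i @^-1` [set f i]).
  apply/seteqP; split => [t /= Pt|t [f [t0 [Pt0 e]]] /= h].
    exists [ffun i => test i t]; first by exists t; split => // i; rewrite ffunE.
    by move=> i _ /=; rewrite ffunE.
  by rewrite (Pdet t t0) // => i; rewrite e; apply: h.
apply: fin_bigcup_measurable; first exact: finite_finset.
move=> f _; apply: fin_bigcap_measurable; first exact: finite_finset.
by move=> i _; have := mtest i measurableT [set f i] Logic.I; rewrite setTI.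
Qed.

Lemma measurable_fun_finite_range (d : measure_display) (T : measurableType d)
    (R : realType) (f : T -> R) (s : seq R) :
  (forall t, f t \in s) -> (forall v, measurable_fun setT (fun t => f t == v)) ->
  measurable_fun setT f.
Proof.
move=> fs mf _ B mB; rewrite setTI.
have -> : f @^-1` B = \big[setU/set0]_(v <- s) ([set t | f t == v] `&` [set _ | B v]).
  apply/seteqP; split => [t /= Bt|t].
    move: (fs t); elim: s {fs} => // a s IH.
    rewrite in_cons big_cons => /orP [/eqP e|/IH h]; last by right.
    by left; split => /=; [rewrite e eqxx|rewrite -e].
  elim: s {fs} => [|a s IH]; first by rewrite big_nil.
  by rewrite big_cons => -[[/= /eqP -> ]|/IH].
apply: bigsetU_measurable => v _; apply: measurableI.
  by have := mf v measurableT [set true] Logic.I; rewrite setTI.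
have [Bv|nBv] := pselect (B v).
  by rewrite (_ : [set _ | B v] = setT) //; apply/seteqP; split.
by rewrite (_ : [set _ | B v] = set0) //; apply/seteqP; split.
Qed.

Lemma measurable_inv (R : realType) : measurable_fun [set: R] (@GRing.inv R).
Proof.
have -> : @GRing.inv R = fun x => if 0 <= x then powR x (-1) else - powR (- x) (-1).
  apply/funext => x; case: ifP => x0; first by rewrite powR_inv1.
  by rewrite powR_inv1 ?invrN ?opprK // oppr_ge0 ltW // ltNge x0.
apply: measurable_fun_ifT.
- by apply: measurable_fun_ler => //; exact: measurable_cst.
- exact: measurable_powR.
- apply: measurable_funN; apply: (measurableT_comp (measurable_powR _)).
  exact: measurable_funN.
Qed.

Lemma ge0_le_integralT (R : realType) d (T : measurableType d)
    (mu : {measure set T -> \bar R}) (f g : T -> \bar R) :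
  (forall x, (0 <= f x)%E) -> (forall x, (f x <= g x)%E) ->
  (\int[mu]_(x in setT) f x <= \int[mu]_(x in setT) g x)%E.
Proof.
move=> f0 fg; have g0 x : (0 <= g x)%E := le_trans (f0 x) (fg x).
rewrite !ge0_integralTE //; apply: ereal_sup_le => _ [h hf <-].
by exists h => // x; exact: le_trans (hf x) (fg x).
Qed.

Section IidExchangeable.
Context (R : realType) (dO dZ : measure_display) (Omega : measurableType dO)
  (Z : measurableType dZ) (N : nat) (Pr : probability Omega R) (P : probability Z R)
  (Zs : 'I_N -> Omega -> Z).
Hypothesis Zs_iid : iid Pr P Zs.

Definition sample (omega : Omega) : N.-tuple Z := [tuple Zs i omega | i < N].
Definition tuple_perm (s : {perm 'I_N}) (t : N.-tuple Z) : N.-tuple Z :=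
  [tuple tnth t (s i) | i < N].

Definition rectangles : set (set (N.-tuple Z)) :=
  [set B | exists A : 'I_N -> set Z, (forall i, measurable (A i)) /\
     B = \bigcap_(i in [set: 'I_N]) ((fun t => tnth t i) @^-1` A i)].

Lemma measurable_rectangles : @measurable _ (N.-tuple Z) = <<s rectangles >>.
Proof.
apply/seteqP; split.
- apply: smallest_sub; first exact: smallest_sigma_algebra.
  move=> B; rewrite -bigcup_seq => -[i _ [A mA <-]].
  apply: sub_sigma_algebra; exists (fun j => if j == i then A else setT); split.
    by move=> j; case: ifP.
  apply/seteqP; split => [t [_ /= At] j _ /=|t /= h].
    by case: ifP => // /eqP ->.
  by split => //; have := h i Logic.I; rewrite /= eqxx.
- apply: smallest_sub; first exact: sigma_algebra_measurable.
  move=> B [A [mA ->]]; apply: fin_bigcap_measurable; first exact: finite_finset.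
  by move=> i _; have := @measurable_tnth _ Z N i measurableT (A i) (mA i); rewrite setTI.
Qed.

Lemma rectangles_setI : setI_closed rectangles.
Proof.
move=> B1 B2 [A1 [m1 ->]] [A2 [m2 ->]]; exists (fun i => A1 i `&` A2 i); split.
  by move=> i; apply: measurableI.
apply/seteqP; split => [t [h1 h2] i _|t h]; first by split; [exact: h1|exact: h2].
by split => i _; have [] := h i Logic.I.
Qed.

Lemma measurable_sample : measurable_fun setT sample.
Proof.
apply/measurable_fun_tnthP => i.
rewrite (_ : _ \o _ = Zs i); first exact: Zs_iid.1.
by apply/funext => omega /=; rewrite tnth_mktuple.
Qed.

Lemma measurable_tuple_perm s : measurable_fun setT (tuple_perm s).
Proof.
apply/measurable_fun_tnthP => i.
rewrite (_ : _ \o _ = (fun t => tnth t (s i))); first exact: measurable_tnth.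
by apply/funext => t /=; rewrite tnth_mktuple.
Qed.

Lemma iid_rectangle (A : 'I_N -> set Z) : (forall i, measurable (A i)) ->
  Pr (\bigcap_(i in [set: 'I_N]) (Zs i @^-1` A i)) = (\prod_(i < N) fine (P (A i)))%:E.
Proof.
move=> mA; rewrite -Zs_iid.2 // fineK //; apply: fin_num_measure.
apply: fin_bigcap_measurable; first exact: finite_finset.
by move=> i _; have := Zs_iid.1 i measurableT (A i) (mA i); rewrite setTI.
Qed.

(* Both laws are determined by their values on the pi-system of rectangles,
   and the iid product formula is invariant under permuting the factors. *)
Lemma pushforward_sample_perm (s : {perm 'I_N}) (A : set (N.-tuple Z)) :
  measurable A -> pushforward Pr sample A = pushforward Pr (tuple_perm s \o sample) A.
Proof.
move=> mA.
have ms : measurable_fun setT (tuple_perm s \o sample).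
  exact: measurableT_comp (measurable_tuple_perm s) measurable_sample.
apply: (@measure_unique _ _ _ rectangles (fun=> setT) measurable_rectangles
  rectangles_setI _ _
  (measure_function_pushforward__canonical__measure_function_Measure Pr measurable_sample)
  (measure_function_pushforward__canonical__measure_function_Measure Pr ms)) => //.
- by exists (fun=> setT); split => //; apply/seteqP; split.
- by rewrite bigcup_const.
- move=> B [A' [mA' ->]]; rewrite /= /pushforward.
  rewrite (_ : _ @^-1` _ = \bigcap_(i in [set: 'I_N]) (Zs i @^-1` A' i)); last first.
    by apply/seteqP; split => omega h i _; have := h i Logic.I; rewrite /= tnth_mktuple.
  rewrite (_ : _ @^-1` _ = \bigcap_(i in [set: 'I_N]) (Zs i @^-1` A' (s^-1 i)%g)); last first.
    apply/seteqP; split => omega h i _.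
      by have := h (s^-1 i)%g Logic.I; rewrite /= !tnth_mktuple permKV.
    by have := h (s i) Logic.I; rewrite /= !tnth_mktuple permK.
  rewrite !iid_rectangle //; congr (_%:E).
  by rewrite [RHS](reindex_inj (@perm_inj _ s)) /=; apply: eq_bigr => i _; rewrite permK.
- by move=> _; rewrite /= /pushforward preimage_setT probability_setT ltry.
Qed.

Lemma iid_integral_perm (s : {perm 'I_N}) (F : N.-tuple Z -> \bar R) :
  measurable_fun setT F -> (forall t, (0 <= F t)%E) ->
  (\int[Pr]_(omega in setT) F (sample omega)
   = \int[Pr]_(omega in setT) F (tuple_perm s (sample omega)))%E.
Proof.
move=> mF F0.
have ms : measurable_fun setT (tuple_perm s \o sample).
  exact: measurableT_comp (measurable_tuple_perm s) measurable_sample.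
have e1 := ge0_integral_pushforward measurable_sample Pr measurableT mF (fun t _ => F0 t).
have e2 := ge0_integral_pushforward ms Pr measurableT mF (fun t _ => F0 t).
rewrite preimage_setT in e1 e2; rewrite -[LHS]e1 -[RHS]e2.
apply: eq_measure_integral; first exact: measurable_sample.
by move=> ? A mA _; exact: pushforward_sample_perm.
Qed.

End IidExchangeable.

Section LeastNonneg.
Variable R : realType.
Implicit Types (P : R -> bool) (mu : R).

Definition is_least_nonneg P mu : Prop :=
  0 <= mu /\ P mu /\ forall mu', 0 <= mu' -> P mu' -> mu <= mu'.

Lemma is_least_nonneg_uniq P mu1 mu2 :
  is_least_nonneg P mu1 -> is_least_nonneg P mu2 -> mu1 = mu2.
Proof. by move=> [h1 [P1 min1]] [h2 [P2 min2]]; apply/eqP; rewrite eq_le min1 // min2. Qed.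

Definition least_nonneg P : option R :=
  match pselect (exists mu, is_least_nonneg P mu) with
  | left H => Some (proj1_sig (cid H))
  | right _ => None
  end.

Lemma least_nonneg_Some P mu : is_least_nonneg P mu -> least_nonneg P = Some mu.
Proof.
move=> h; rewrite /least_nonneg; case: pselect => [H|[]]; last by exists mu.
by case: (cid H) => mu' h' /=; rewrite (is_least_nonneg_uniq h' h).
Qed.

Lemma least_nonneg_None P : ~ (exists mu, is_least_nonneg P mu) -> least_nonneg P = None.
Proof. by rewrite /least_nonneg; case: pselect. Qed.

End LeastNonneg.

(* If [P] can only change value at the finitely many points [c kk], one of
   which is [0], then its least nonnegative solution is one of these points,
   and it can be recognised by testing [P] at the points and at the
   midpoints between them. *)
Section LeastNonnegOnGrid.
Variables (R : realType) (K : finType) (c : K -> R) (k0 : K) (P : R -> bool).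
Hypothesis c_k0 : c k0 = 0.
Hypothesis P_const : forall mu mu', mu <= mu' ->
  (forall kk, mu <= c kk -> c kk <= mu' -> False) -> P mu = P mu'.

Definition grid_mid (k1 k2 : K) : R := (c k1 + c k2) / 2.

Definition is_least_grid (kk : K) : bool :=
  [&& 0 <= c kk, P (c kk) &
      [forall k1, forall k2, (0 <= grid_mid k1 k2 < c kk) ==> ~~ P (grid_mid k1 k2)]].

Lemma grid_below mu : 0 < mu -> exists kk, c kk < mu /\ forall kk', c kk' < mu -> c kk' <= c kk.
Proof.
move=> mu_gt0; have k0P : c k0 < mu by rewrite c_k0.
case: (@arg_maxP _ _ _ k0 (fun kk => c kk < mu) c k0P) => kk kk_lt max_kk.
by exists kk; split => // kk' /max_kk.
Qed.

Lemma least_nonneg_on_grid mu : is_least_nonneg P mu -> exists kk, c kk = mu.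
Proof.
move=> [mu_ge0 [Pmu min_mu]]; apply/not_existsP => off_grid.
have mu_gt0 : 0 < mu.
  by rewrite lt_def mu_ge0 andbT; apply/eqP => mu0; apply: (off_grid k0); rewrite c_k0.
have [kl [kl_lt max_kl]] := grid_below mu_gt0.
have lo_ge0 : 0 <= c kl by rewrite -c_k0 max_kl // c_k0.
pose q := (c kl + mu) / 2.
have q_ge0 : 0 <= q by rewrite /q; lra.
have q_lt : q < mu by rewrite /q; lra.
have Pq : P q.
  rewrite (P_const (ltW q_lt)) // => kk q_le le_mu.
  have kk_lt : c kk < mu by rewrite lt_neqAle le_mu andbT; apply/eqP; exact: off_grid.
  by have := max_kl kk kk_lt; rewrite leNgt (lt_le_trans _ q_le) // /q; lra.
by have := min_mu q q_ge0 Pq; rewrite leNgt q_lt.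
Qed.

Lemma is_least_grid_least kk : is_least_grid kk -> is_least_nonneg P (c kk).
Proof.
case/and3P => h0 Pc /forallP no_mid; split => //; split => // mu' mu'_ge0 Pmu'.
rewrite leNgt; apply/negP => mu'_lt.
have no_midP k1 k2 : 0 <= grid_mid k1 k2 -> grid_mid k1 k2 < c kk -> ~~ P (grid_mid k1 k2).
  by move=> ? ?; have /forallP /(_ k2) /implyP := no_mid k1; apply; apply/andP.
have [[k1 e1]|off_grid] := pselect (exists k1, c k1 = mu').
  have mid_k1 : grid_mid k1 k1 = mu' by rewrite /grid_mid e1; field.
  by have := no_midP k1 k1; rewrite mid_k1 mu'_ge0 mu'_lt Pmu' => /(_ isT isT).
have mu'_gt0 : 0 < mu'.
  by rewrite lt_def mu'_ge0 andbT; apply/eqP => e; apply: off_grid; exists k0; rewrite c_k0.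
have [kl [kl_lt max_kl]] := grid_below mu'_gt0.
have kkP : mu' < c kk by [].
have [kh kh_gt min_kh] := @arg_minP _ _ _ kk (fun kk => mu' < c kk) c kkP.
have lo_ge0 : 0 <= c kl by rewrite -c_k0 max_kl // c_k0.
have hi_le : c kh <= c kk by exact: min_kh.
have mid_gt : c kl < grid_mid kl kh by rewrite /grid_mid; lra.
have mid_lt : grid_mid kl kh < c kh by rewrite /grid_mid; lra.
have gap a b : c kl < a -> b < c kh -> forall kk', a <= c kk' -> c kk' <= b -> False.
  move=> la bh kk' h1 h2; have [h3|h3|h3] := ltgtP (c kk') mu'.
  - by have := max_kl kk' h3; rewrite leNgt (lt_le_trans la h1).
  - by have := min_kh kk' h3; rewrite leNgt (le_lt_trans h2 bh).
  - by apply: off_grid; exists kk'.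
have Pmid : P (grid_mid kl kh).
  have [le1|le1] := leP (grid_mid kl kh) mu'.
    by rewrite (P_const le1 (gap _ mu' mid_gt kh_gt)).
  by rewrite -(P_const (ltW le1) (gap mu' _ kl_lt mid_lt)).
have mid_ge0 : 0 <= grid_mid kl kh by rewrite (le_trans lo_ge0 (ltW mid_gt)).
by have := no_midP kl kh mid_ge0 (lt_le_trans mid_lt hi_le); rewrite Pmid.
Qed.

Lemma is_least_gridP kk : is_least_nonneg P (c kk) <-> is_least_grid kk.
Proof.
split; last exact: is_least_grid_least.
move=> [h0 [Pc min_c]]; rewrite /is_least_grid h0 Pc /=.
apply/forallP => k1; apply/forallP => k2; apply/implyP => /andP [q0 q_lt].
by apply/negP => Pq; have := min_c _ q0 Pq; rewrite leNgt q_lt.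
Qed.

Lemma least_nonneg_gridE : least_nonneg P = omap c [pick kk | is_least_grid kk].
Proof.
case: pickP => [kk /is_least_gridP /least_nonneg_Some //|no_grid].
apply: least_nonneg_None => -[mu hmu].
have [kk ckk] := least_nonneg_on_grid hmu.
by move: hmu; rewrite -ckk => /is_least_gridP; rewrite no_grid.
Qed.

End LeastNonnegOnGrid.

Lemma affine_sign_const (R : realFieldType) (a b mu mu' : R) : mu <= mu' ->
    ~~ (mu <= - a / b <= mu') ->
  (0 < a + mu * b) = (0 < a + mu' * b) /\ (a + mu * b == 0) = (a + mu' * b == 0).
Proof.
move=> le_mu; have [->|b0] := eqVneq b 0; first by rewrite !mulr0.
have e x : a + x * b = b * (x - - a / b) by field.
rewrite !e !mulf_eq0 (negbTE b0) /= !subr_eq0 negb_and -!ltNge => /orP [h|h].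
- have h' := lt_le_trans h le_mu.
  by rewrite !pmulr_lgt0 ?subr_gt0 // (gt_eqF h) (gt_eqF h').
- have h' := le_lt_trans le_mu h.
  by rewrite !nmulr_lgt0 ?subr_lt0 // (lt_eqF h) (lt_eqF h').
Qed.

Lemma lhat_pos_antimono (R : realFieldType) (alpha w p mu1 mu2 : R) :
  alpha < 1 -> 0 < w -> 0 <= p -> 0 <= mu1 -> mu1 <= mu2 ->
  0 < lhat alpha w p mu2 -> 0 < lhat alpha w p mu1.
Proof.
rewrite /lhat => a1 w0 p0 mu1_ge0 le_mu.
have [slope_ge0|slope_lt0] := leP 0 (p - (1 - alpha)).
  have : 0 < w * p by rewrite mulr_gt0 //; lra.
  have : 0 <= mu1 * (p - (1 - alpha)) by rewrite mulr_ge0.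
  lra.
have : mu2 * (p - (1 - alpha)) <= mu1 * (p - (1 - alpha)) by rewrite ler_wnM2r // ltW.
lra.
Qed.

Lemma Dmu_antimono (R : realFieldType) (k : nat) (alpha : R) (w ph : 'I_k -> R) mu1 mu2 :
  alpha < 1 -> (forall i, 0 < w i) -> (forall i, 0 <= ph i) -> 0 <= mu1 -> mu1 <= mu2 ->
  Dmu alpha w ph mu2 -> Dmu alpha w ph mu1.
Proof.
move=> a1 w0 p0 mu1_ge0 le_mu /existsP [i hi]; apply/existsP; exists i.
exact: lhat_pos_antimono hi.
Qed.

(* The selection [C^mu] and [D^mu] depend on [mu] only through the signs of
   the affine functions [lgap c o], which compare [hat-ell_c] with
   [hat-ell_c'] ([o = Some c']) or with [0] ([o = None]). *)
Section SelectionSigns.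
Variables (R : realFieldType) (k : nat) (alpha : R) (w : 'I_k.+1 -> R).
Implicit Types (ph : 'I_k.+1 -> R) (mu : R).

Definition lgap ph mu (c : 'I_k.+1) (o : option 'I_k.+1) : R :=
  lhat alpha (w c) (ph c) mu - (if o is Some c' then lhat alpha (w c') (ph c') mu else 0).

Lemma lgap_affine ph mu c o :
  lgap ph mu c o = lgap ph 0 c o + mu * (lgap ph 1 c o - lgap ph 0 c o).
Proof. by rewrite /lgap /lhat; case: o => *; ring. Qed.

Definition lgap_root ph c o : R := - lgap ph 0 c o / (lgap ph 1 c o - lgap ph 0 c o).

Definition same_lgap_signs ph mu ph' mu' : Prop := forall c o,
  (0 < lgap ph mu c o) = (0 < lgap ph' mu' c o) /\
  (lgap ph mu c o == 0) = (lgap ph' mu' c o == 0).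

Lemma same_lgap_signs_off_roots ph mu mu' : mu <= mu' ->
  (forall c o, ~~ (mu <= lgap_root ph c o <= mu')) -> same_lgap_signs ph mu ph mu'.
Proof.
move=> le_mu off_roots c o; rewrite (lgap_affine ph mu) (lgap_affine ph mu').
exact: affine_sign_const (off_roots c o).
Qed.

Lemma prefer_lgap ph mu i j : prefer alpha w ph mu i j =
  (0 < lgap ph mu i (Some j))
  || ((lgap ph mu i (Some j) == 0) && ((w i < w j) || ((w i == w j) && (i < j)%N))).
Proof. by rewrite /lgap subr_gt0 subr_eq0. Qed.

Lemma Dmu_lgap ph mu : Dmu alpha w ph mu = [exists c, 0 < lgap ph mu c None].
Proof. by rewrite /lgap; apply: eq_existsb => c; rewrite subr0. Qed.

Lemma selection_sign_determined ph ph' mu mu' :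
  same_lgap_signs ph mu ph' mu' ->
  Cidx alpha w ph mu = Cidx alpha w ph' mu' /\ Dmu alpha w ph mu = Dmu alpha w ph' mu'.
Proof.
move=> signs; split; last by rewrite !Dmu_lgap; apply: eq_existsb => c; case: (signs c None).
rewrite /Cidx; congr odflt; apply: eq_pick => i /=; apply: eq_forallb => j.
by rewrite !prefer_lgap; case: (signs i (Some j)) => -> ->.
Qed.

End SelectionSigns.

Section Oracle.
Variables (R : realType) (X Y : Type) (k n m : nat) (alpha : R).
Variables (S : 'I_k.+1 -> set Y) (w : 'I_k.+1 -> R) (phat : 'I_k.+1 -> X -> R).
Hypotheses (alpha_gt0 : 0 < alpha) (alpha_lt1 : alpha < 1) (m_gt0 : (0 < m)%N).
Hypotheses (w_gt0 : forall c, 0 < w c) (phat_ge0 : forall c x, 0 <= phat c x).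
Hypothesis C_nested : forall x mu1 mu2, 0 <= mu1 -> mu1 < mu2 ->
  Cset alpha S w phat mu1 x `<=` Cset alpha S w phat mu2 x.

Local Notation N := (n + m)%N.
Local Notation Dv := (Dv alpha w phat).
Local Notation Cset := (Cset alpha S w phat).
Local Notation phx x := (fun c => phat c x).

Definition false_disc (mu : R) (z : X * Y) : bool := (z.2 \notin Cset mu z.1) && Dv mu z.1.

Lemma false_disc_antimono z mu1 mu2 : 0 <= mu1 -> mu1 <= mu2 ->
  false_disc mu2 z -> false_disc mu1 z.
Proof.
move=> mu1_ge0; rewrite le_eqVlt => /orP [/eqP -> //|lt_mu].
case/andP => notC D2; apply/andP; split.
  by apply: contra notC; rewrite !inE; exact: C_nested.
exact: Dmu_antimono alpha_lt1 w_gt0 (phat_ge0^~ z.1) mu1_ge0 (ltW lt_mu) D2.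
Qed.

Definition n_false_disc (j : 'I_m) (d : 'I_N -> X * Y) (mu : R) : nat :=
  (\sum_(i < n) false_disc mu (d (calib m i)) + false_disc mu (d (test n j)))%N.

Definition n_disc_other (j : 'I_m) (d : 'I_N -> X * Y) (mu : R) : nat :=
  (\sum_(l < m | l != j) Dv mu (d (test n l)).1)%N.

Definition oracle_cond j d (mu : R) : bool :=
  (n_false_disc j d mu)%:R * m%:R <= alpha * n.+1%:R * (n_disc_other j d mu).+1%:R.

Definition oracle_weight j (i : 'I_N) d : R :=
  if least_nonneg (oracle_cond j d) is Some mu
  then (false_disc mu (d i))%:R / (n_false_disc j d mu)%:R else 0.

Lemma oracle_weight_ge0 j i d : 0 <= oracle_weight j i d.
Proof. by rewrite /oracle_weight; case: least_nonneg => // mu; apply: divr_ge0. Qed.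

Lemma oracle_weight_sum_le1 j d :
  \sum_(i < n) oracle_weight j (calib m i) d + oracle_weight j (test n j) d <= 1.
Proof.
rewrite /oracle_weight; case: least_nonneg => [mu|]; last by rewrite big1 ?add0r.
rewrite -mulr_suml -mulrDl -natr_sum -natrD -/(n_false_disc j d mu).
by have [->|nz] := eqVneq (n_false_disc j d mu)%:R (0 : R); rewrite ?invr0 ?mulr0 ?divff.
Qed.

Lemma n_false_disc_le j d mu : (n_false_disc j d mu <= n.+1)%N.
Proof.
rewrite /n_false_disc -addn1 leq_add ?leq_b1 //.
by rewrite -[X in (_ <= X)%N]card_ord -sum1_card leq_sum // => i _; rewrite leq_b1.
Qed.

Lemma mu_cond_mulE (xs : 'I_N -> X) (ys : 'I_N -> Y) mu :
  mu_cond alpha S w phat xs ys mu <->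
  (\sum_(i < n) ((ys (calib m i) \notin Cset mu (xs (calib m i)))
                   && Dv mu (xs (calib m i)))%:R + 1) * m%:R
   <= alpha * n.+1%:R * Num.max 1 (\sum_(j < m) (Dv mu (xs (test n j)))%:R).
Proof.
rewrite /mu_cond; set A := (X in (X + 1) / _); set M := Num.max _ _.
have M_gt0 : 0 < M by rewrite lt_max ltr01.
have m_ne0 : m%:R != 0 :> R by rewrite pnatr_eq0 -lt0n.
have -> : (A + 1) / n.+1%:R / (M / m%:R) = ((A + 1) * m%:R) / (n.+1%:R * M).
  by field; rewrite m_ne0 lt0r_neq0 // addrC natr1 pnatr_eq0.
by rewrite ler_pdivrMr ?mulr_gt0 // mulrA.
Qed.

Lemma n_disc_other_succ j d mu : false_disc mu (d (test n j)) ->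
  (n_disc_other j d mu).+1%:R =
  Num.max 1 (\sum_(l < m) (Dv mu (d (test n l)).1)%:R) :> R.
Proof.
move=> /andP [_ D_j]; rewrite (bigD1 j) //= D_j -natr1 natr_sum addrC max_r //.
by rewrite lerDr sumr_ge0.
Qed.

Lemma oracle_cond_mu_cond (xs : 'I_N -> X) (ys : 'I_N -> Y) j mu :
  false_disc mu (xs (test n j), ys (test n j)) ->
  oracle_cond j (fun i => (xs i, ys i)) mu <-> mu_cond alpha S w phat xs ys mu.
Proof.
move=> fd_j; rewrite mu_cond_mulE /oracle_cond (n_disc_other_succ fd_j).
by rewrite /n_false_disc fd_j natrD natr_sum.
Qed.

Lemma is_least_oracle_cond (xs : 'I_N -> X) (ys : 'I_N -> Y) j mu :
  is_mu_min alpha S w phat xs ys mu -> false_disc mu (xs (test n j), ys (test n j)) ->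
  is_least_nonneg (oracle_cond j (fun i => (xs i, ys i))) mu.
Proof.
move=> [mu_ge0 [cond_mu min_mu]] fd_j; split => //; split.
  exact/(oracle_cond_mu_cond fd_j).
move=> mu' mu'_ge0 cond'; rewrite leNgt; apply/negP => lt_mu.
have fd'_j := false_disc_antimono mu'_ge0 (ltW lt_mu) fd_j.
by have := min_mu mu' mu'_ge0 ((oracle_cond_mu_cond fd'_j).1 cond'); rewrite leNgt lt_mu.
Qed.

Lemma FDP_le_oracle_weights (xs : 'I_N -> X) (ys : 'I_N -> Y) :
  FDP n m alpha S w phat xs ys <=
  alpha * n.+1%:R / m%:R * \sum_(j < m) oracle_weight j (test n j) (fun i => (xs i, ys i)).
Proof.
set d := fun i => (xs i, ys i).
have c_ge0 : 0 <= alpha * n.+1%:R / m%:R by rewrite divr_ge0 // mulr_ge0 // ltW.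
rewrite /FDP /mu_alpha; case: pselect => [H|_]; last first.
  by rewrite mulr_ge0 // sumr_ge0 // => j _; exact: oracle_weight_ge0.
case: (cid H) => mu hmu /=; have cond_mu := hmu.2.1.
set M := Num.max _ _; have M_gt0 : 0 < M by rewrite lt_max ltr01.
rewrite mulr_suml mulr_sumr; apply: ler_sum => j _.
have [fd_j|nfd_j] := boolP (false_disc mu (d (test n j))); last first.
  move: nfd_j; rewrite /false_disc /= => /negbTE ->; rewrite mul0r.
  by rewrite mulr_ge0 ?oracle_weight_ge0.
move: (fd_j); rewrite /false_disc /= => ->; rewrite mul1r.
rewrite /oracle_weight (least_nonneg_Some (is_least_oracle_cond hmu fd_j)) fd_j mul1r.
have := (@oracle_cond_mu_cond xs ys j mu fd_j).2 cond_mu.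
rewrite /oracle_cond (n_disc_other_succ fd_j) -/M.
set F := (n_false_disc j d mu)%:R => condF.
have F_gt0 : 0 < F by rewrite ltr0n /n_false_disc fd_j addn1.
have m_gt0' : 0 < m%:R :> R by rewrite ltr0n.
by rewrite ler_pdivlMr // mulrC ler_pdivrMr // mulrAC ler_pdivlMr.
Qed.

Lemma n_false_disc_sum_pred j d mu : n_false_disc j d mu =
  (\sum_(l < N | (l < n)%N || (l == test n j)) false_disc mu (d l))%N.
Proof.
rewrite big_split_ord /n_false_disc; congr addn.
  by apply: eq_big => // i; rewrite /= ltn_ord.
rewrite (big_pred1 j) // => j' /=.
rewrite ltnNge leq_addr /=; apply/eqP/eqP => [/(congr1 val) /= /eqP|->] //.
by rewrite eqn_add2l => /eqP /val_inj.
Qed.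

Lemma calib_neq_test (i : 'I_n) (j : 'I_m) : calib m i != test n j.
Proof. by apply/eqP => /(congr1 val) /= ij; have := ltn_ord i; rewrite ij ltnNge leq_addr. Qed.

Section SwapCalibTest.
Variables (i : 'I_n) (j : 'I_m) (d : 'I_N -> X * Y).
Let s := tperm (calib m i) (test n j).

Lemma n_false_disc_tperm mu : n_false_disc j (d \o s) mu = n_false_disc j d mu.
Proof.
have in_s l : ((s l < n)%N || (s l == test n j)) = ((l < n)%N || (l == test n j)).
  by rewrite /s; case: tpermP => [->|->|//]; rewrite /= ltn_ord eqxx orbT.
rewrite !n_false_disc_sum_pred [RHS](reindex_inj (@perm_inj _ s)) /=.
by apply: eq_big => // l; rewrite in_s.
Qed.

Lemma n_disc_other_tperm mu : n_disc_other j (d \o s) mu = n_disc_other j d mu.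
Proof.
apply: eq_bigr => l lj; rewrite /= /s tpermD ?calib_neq_test //.
by rewrite /test (inj_eq (@rshift_inj _ _)) eq_sym.
Qed.

Lemma oracle_weight_tperm : oracle_weight j (calib m i) d = oracle_weight j (test n j) (d \o s).
Proof.
rewrite /oracle_weight.
have -> : oracle_cond j (d \o s) = oracle_cond j d.
  by apply/funext => mu; rewrite /oracle_cond n_false_disc_tperm n_disc_other_tperm.
by case: least_nonneg => // mu; rewrite n_false_disc_tperm /= tpermR.
Qed.

End SwapCalibTest.

Lemma false_disc_sign_determined (z z' : X * Y) mu mu' :
  same_lgap_signs alpha w (phx z.1) mu (phx z'.1) mu' ->
  (forall c, (z.2 \in S c) = (z'.2 \in S c)) ->
  false_disc mu z = false_disc mu' z' /\ Dv mu z.1 = Dv mu' z'.1.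
Proof.
move=> signs mem; have [eC eD] := selection_sign_determined signs.
by rewrite /false_disc /Dv /Defs.Cset eC eD mem.
Qed.

Lemma oracle_determined j d d' mu mu' :
  (forall l, false_disc mu (d l) = false_disc mu' (d' l) /\ Dv mu (d l).1 = Dv mu' (d' l).1) ->
  oracle_cond j d mu = oracle_cond j d' mu' /\ n_false_disc j d mu = n_false_disc j d' mu'.
Proof.
move=> same; have e_fd : n_false_disc j d mu = n_false_disc j d' mu'.
  by rewrite /n_false_disc (same _).1; congr addn; apply: eq_bigr => l _; rewrite (same _).1.
have e_D : n_disc_other j d mu = n_disc_other j d' mu'.
  by apply: eq_bigr => l _; rewrite (same _).2.
by rewrite /oracle_cond e_fd e_D.
Qed.

(* [None] stands for the point [0], [Some (l, c, o)] for the root of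
   [lgap c o] at the data point [l]. *)
Definition oracle_grid_index := option ('I_N * 'I_k.+1 * option 'I_k.+1).

Definition oracle_grid (d : 'I_N -> X * Y) (kk : oracle_grid_index) : R :=
  if kk is Some (l, c, o) then lgap_root alpha w (phx (d l).1) c o else 0.

Lemma oracle_cond_off_grid j d mu mu' : mu <= mu' ->
  (forall kk, mu <= oracle_grid d kk -> oracle_grid d kk <= mu' -> False) ->
  oracle_cond j d mu = oracle_cond j d mu'.
Proof.
move=> le_mu off_grid.
have same l : false_disc mu (d l) = false_disc mu' (d l) /\ Dv mu (d l).1 = Dv mu' (d l).1.
  apply: false_disc_sign_determined => //.
  apply: same_lgap_signs_off_roots => // c o; apply/negP => /andP [lo hi].
  exact: off_grid (Some (l, c, o)) lo hi.
by have [] := oracle_determined j same.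
Qed.

Lemma least_oracle_gridE j d : least_nonneg (oracle_cond j d) =
  omap (oracle_grid d) [pick kk | is_least_grid (oracle_grid d) (oracle_cond j d) kk].
Proof. exact: (least_nonneg_gridE (k0 := None)) (@oracle_cond_off_grid j d). Qed.

End Oracle.

Section OracleMeasurable.
Variables (R : realType) (dX dY : measure_display) (X : measurableType dX).
Variables (Y : measurableType dY) (k n m : nat) (alpha : R).
Variables (S : 'I_k.+1 -> set Y) (w : 'I_k.+1 -> R) (phat : 'I_k.+1 -> X -> R).
Hypotheses (S_meas : forall c, measurable (S c)) (phat_meas : forall c, measurable_fun setT (phat c)).

Local Notation N := (n + m)%N.
Local Notation T := (N.-tuple (X * Y)%type).
Local Notation G := (@oracle_grid_index k n m).
Local Notation grid := (oracle_grid alpha w phat).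
Local Notation phx x := (fun c => phat c x).

Lemma measurable_lgap l c o (f : T -> R) : measurable_fun setT f ->
  measurable_fun setT (fun t : T => lgap alpha w (phx (tnth t l).1) (f t) c o).
Proof.
move=> mf.
have mph c' : measurable_fun setT (fun t : T => phat c' (tnth t l).1).
  apply: measurableT_comp; first exact: phat_meas.
  exact: measurableT_comp measurable_fst (measurable_tnth l).
have mlhat c' : measurable_fun setT (fun t : T => lhat alpha (w c') (phat c' (tnth t l).1) (f t)).
  apply: measurable_funD; first exact: measurable_funM.
  by apply: measurable_funM => //; apply: measurable_funB.
by rewrite /lgap; case: o => [c'|]; apply: measurable_funB.
Qed.

Lemma measurable_oracle_grid kk : measurable_fun setT (fun t : T => grid (tnth t) kk).
Proof.
case: kk => [[[l c] o]|] /=; last exact: measurable_cst.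
apply: measurable_funM; first by apply: measurable_funN; exact: measurable_lgap.
apply: measurableT_comp; first exact: measurable_inv.
by apply: measurable_funB; exact: measurable_lgap.
Qed.

Definition grid_point (t : T) (e : G + G * G) : R :=
  match e with
  | inl kk => grid (tnth t) kk
  | inr (k1, k2) => grid_mid (grid (tnth t)) k1 k2
  end.

Lemma measurable_grid_point e : measurable_fun setT (grid_point ^~ e).
Proof.
case: e => [kk|[k1 k2]]; first exact: measurable_oracle_grid.
by apply: measurable_funM => //; apply: measurable_funD; exact: measurable_oracle_grid.
Qed.

(* [inl (inl (e, l, c, o, b))]: sign ([b]) or vanishing of [lgap c o] at the
   grid point [e] for the data point [l]; [inl (inr (l, c))]: [Y_l \in S c];
   [inr (inl e)]: [0 <= e]; [inr (inr (e, kk))]: [e] lies below [kk]. *)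
Definition oracle_test_index := ((G + G * G) * 'I_N * 'I_k.+1 * option 'I_k.+1 * bool
  + 'I_N * 'I_k.+1 + ((G + G * G) + (G + G * G) * G))%type.

Definition oracle_test (i : oracle_test_index) (t : T) : bool :=
  match i with
  | inl (inl (e, l, c, o, true)) => 0 < lgap alpha w (phx (tnth t l).1) (grid_point t e) c o
  | inl (inl (e, l, c, o, false)) => lgap alpha w (phx (tnth t l).1) (grid_point t e) c o == 0
  | inl (inr (l, c)) => (tnth t l).2 \in S c
  | inr (inl e) => 0 <= grid_point t e
  | inr (inr (e, kk)) => grid_point t e < grid (tnth t) kk
  end.

Lemma measurable_oracle_test i : measurable_fun setT (oracle_test i).
Proof.
case: i => [[[[[[e l] c] o] []]|[l c]]|[e|[e kk]]] /=.
- apply: measurable_fun_ltr; first exact: measurable_cst.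
  apply: measurable_lgap; exact: measurable_grid_point.
- apply: measurable_fun_eqr; last exact: measurable_cst.
  apply: measurable_lgap; exact: measurable_grid_point.
- apply: (measurable_fun_bool true).
  rewrite [X in measurable X](_ : _ = (fun t : T => (tnth t l).2) @^-1` S c).
    have := (measurableT_comp measurable_snd (@measurable_tnth _ (X * Y)%type N l)) measurableT (S c) (S_meas c).
    by rewrite setTI.
  by apply/seteqP; split => t /=; [move=> [_ /set_mem]|split => //; apply/mem_set].
- apply: measurable_fun_ler; [exact: measurable_cst|exact: measurable_grid_point].
- apply: measurable_fun_ltr; [exact: measurable_grid_point|exact: measurable_oracle_grid].
Qed.

Lemma oracle_test_fd t t' e : (forall i, oracle_test i t = oracle_test i t') ->
  forall l, false_disc alpha S w phat (grid_point t e) (tnth t l)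
            = false_disc alpha S w phat (grid_point t' e) (tnth t' l) /\
            Dv alpha w phat (grid_point t e) (tnth t l).1
            = Dv alpha w phat (grid_point t' e) (tnth t' l).1.
Proof.
move=> same l; apply: false_disc_sign_determined => [c o|c].
  by split; [exact: (same (inl (inl (e, l, c, o, true))))
            |exact: (same (inl (inl (e, l, c, o, false))))].
exact: (same (inl (inr (l, c)))).
Qed.

Lemma oracle_weight_test_determined j i t t' :
  (forall i, oracle_test i t = oracle_test i t') ->
  oracle_weight alpha S w phat j i (tnth t) = oracle_weight alpha S w phat j i (tnth t').
Proof.
move=> same; have det e := oracle_determined j (oracle_test_fd e same).
have least_grid kk : is_least_grid (grid (tnth t)) (oracle_cond alpha S w phat j (tnth t)) kk
    = is_least_grid (grid (tnth t')) (oracle_cond alpha S w phat j (tnth t')) kk.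
  have [cond_kk _] := det (inl kk); rewrite /= in cond_kk.
  have /= ge0_kk := same (inr (inl (inl kk))).
  rewrite /is_least_grid cond_kk ge0_kk; congr [&& _, _ & _].
  apply: eq_forallb => k1; apply: eq_forallb => k2.
  have [cond_mid _] := det (inr (k1, k2)); rewrite /= in cond_mid.
  have /= ge0_mid := same (inr (inl (inr (k1, k2)))).
  have /= lt_mid := same (inr (inr (inr (k1, k2), kk))).
  by rewrite cond_mid ge0_mid lt_mid.
rewrite /oracle_weight !least_oracle_gridE (eq_pick least_grid).
case: pickP => //= kk _; have [_ e_fd] := det (inl kk).
by rewrite /= in e_fd; rewrite e_fd (oracle_test_fd (inl kk) same i).1.
Qed.

Lemma measurable_oracle_weight j i :
  measurable_fun setT (fun t : T => oracle_weight alpha S w phat j i (tnth t)).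
Proof.
apply: (@measurable_fun_finite_range _ _ _ _
  [seq (a%:R / b%:R : R) | a <- iota 0 2, b <- iota 0 n.+2]).
- move=> t; rewrite /oracle_weight; case: least_nonneg => [mu|]; apply/allpairsP.
    exists (nat_of_bool (false_disc alpha S w phat mu (tnth t i)),
            n_false_disc alpha S w phat j (tnth t) mu) => /=.
    by split => //; [case: false_disc|rewrite (mem_iota 0 n.+2) ltnS n_false_disc_le].
  by exists (0, 0)%N => /=; rewrite mul0r.
- move=> v; apply: (measurable_bool_of_tests measurable_oracle_test) => t t' same.
  by rewrite (oracle_weight_test_determined j i same).
Qed.

End OracleMeasurable.

Lemma FDP_ge0 (R : realType) (X Y : Type) (k n m : nat) (alpha : R)
    (S : 'I_k.+1 -> set Y) (w : 'I_k.+1 -> R) (phat : 'I_k.+1 -> X -> R) xs ys :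
  0 <= FDP n m alpha S w phat xs ys.
Proof. by rewrite /FDP; case: mu_alpha => // mu; rewrite divr_ge0 ?sumr_ge0 // le_max ler01. Qed.

Section OracleExpectation.
Variables (R : realType) (dX dY dO : measure_display) (X : measurableType dX).
Variables (Y : measurableType dY) (Omega : measurableType dO).
Variables (Pr : probability Omega R) (PXY : probability (X * Y)%type R).
Variables (n m k : nat) (alpha : R).
Variables (S : 'I_k.+1 -> set Y) (w : 'I_k.+1 -> R) (phat : 'I_k.+1 -> X -> R).
Variables (Xs : 'I_(n + m) -> Omega -> X) (Ys : 'I_(n + m) -> Omega -> Y).
Hypotheses (S_meas : forall c, measurable (S c)) (phat_meas : forall c, measurable_fun setT (phat c)).
Hypothesis Zs_iid : iid Pr PXY (fun i omega => (Xs i omega, Ys i omega)).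

Local Notation Zs := (fun i omega => (Xs i omega, Ys i omega)).
Local Notation H j i omega :=
  (oracle_weight alpha S w phat j i (fun l => (Xs l omega, Ys l omega))).

Lemma tnth_sample omega : tnth (sample Zs omega) = fun l => (Xs l omega, Ys l omega).
Proof. by apply/funext => l; rewrite tnth_mktuple. Qed.

Lemma measurable_oracle_weight_sample j i : measurable_fun setT (fun omega => H j i omega).
Proof.
have -> : (fun omega => H j i omega) =
    (fun t => oracle_weight alpha S w phat j i (tnth t)) \o sample Zs.
  by apply/funext => omega /=; rewrite tnth_sample.
by apply: measurableT_comp; [exact: measurable_oracle_weight|exact: measurable_sample Zs_iid].
Qed.

Lemma integral_oracle_weight_calib j i :
  (\int[Pr]_(omega in setT) (H j (calib m i) omega)%:E
   = \int[Pr]_(omega in setT) (H j (test n j) omega)%:E)%E.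
Proof.
pose F t := (oracle_weight alpha S w phat j (test n j) (tnth t))%:E.
have -> : (fun omega => (H j (test n j) omega)%:E) = fun omega => F (sample Zs omega).
  by apply/funext => omega; rewrite /F tnth_sample.
rewrite (iid_integral_perm Zs_iid (tperm (calib m i) (test n j))); first last.
- by move=> t; rewrite lee_fin oracle_weight_ge0.
- by apply/measurable_EFinP; exact: measurable_oracle_weight.
congr integral; apply/funext => omega; rewrite /F oracle_weight_tperm.
by congr (oracle_weight _ _ _ _ _ _ _)%:E; apply/funext => l; rewrite /= tnth_mktuple tnth_sample.
Qed.

Lemma integral_oracle_weight_test j :
  (\int[Pr]_(omega in setT) (H j (test n j) omega)%:E <= (n.+1%:R^-1)%:E)%E.
Proof.
set I := (\int[Pr]_(omega in setT) _)%E.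
have H_ge0 i omega : (0 <= (H j i omega)%:E)%E by rewrite lee_fin oracle_weight_ge0.
have mH i : measurable_fun setT (fun omega => (H j i omega)%:E).
  exact/measurable_EFinP/measurable_oracle_weight_sample.
have sum_le1 : (\sum_(i < n) \int[Pr]_(omega in setT) (H j (calib m i) omega)%:E + I <= 1)%E.
  rewrite -ge0_integral_sum // -ge0_integralD //; last 2 first.
  - by move=> omega _; rewrite sume_ge0.
  - exact: emeasurable_sum.
  apply: (@le_trans _ _ (\int[Pr]_(omega in setT) (cst 1%E) omega)%E).
    apply: ge0_le_integral => //.
    - by move=> omega _; rewrite adde_ge0 ?sume_ge0.
    - by apply: emeasurable_funD => //; exact: emeasurable_sum.
    - by move=> omega _; rewrite sumEFin -EFinD lee_fin oracle_weight_sum_le1.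
  by rewrite integral_cst // mul1e probability_le1.
have I_ge0 : (0 <= I)%E by apply: integral_ge0.
have I_fin : I \is a fin_num.
  rewrite ge0_fin_numE // (le_lt_trans _ (ltry 1)) // (le_trans _ sum_le1) // leeDr //.
  by apply: sume_ge0 => i _; exact: integral_ge0.
move: sum_le1; rewrite (eq_bigr (fun=> I)) => [|i _]; last exact: integral_oracle_weight_calib.
rewrite -(fineK I_fin) sumEFin -EFinD !lee_fin sumr_const card_ord -mulrSr.
by rewrite -div1r ler_pdivlMr ?ltr0n // mulr_natr.
Qed.

End OracleExpectation.

Unset Implicit Arguments. Set Strict Implicit.

Theorem theorem2 (R : realType) (dX dY dO : measure_display)
  (X : measurableType dX) (Y : measurableType dY) (Omega : measurableType dO)
  (Pr : probability Omega R) (PXY : probability (X * Y)%type R)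
  (n m k : nat) (alpha B : R)
  (S : 'I_k.+1 -> set Y) (w : 'I_k.+1 -> R) (phat : 'I_k.+1 -> X -> R)
  (Xs : 'I_(n + m) -> Omega -> X) (Ys : 'I_(n + m) -> Omega -> Y) :
  0 < alpha < 1 ->
  (0 < m)%N ->
  (forall i, measurable (S i)) ->
  (forall i, 0 < w i < B) ->
  (forall i, measurable_fun setT (phat i)) ->
  (forall i x, 0 <= phat i x <= 1) ->
  iid Pr PXY (fun i omega => (Xs i omega, Ys i omega)) ->
  (forall x mu1 mu2, 0 <= mu1 -> mu1 < mu2 ->
     Cset alpha S w phat mu1 x `<=` Cset alpha S w phat mu2 x) ->
  (\int[Pr]_(omega in setT)
     (FDP n m alpha S w phat (fun i => Xs i omega) (fun i => Ys i omega))%:E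
   <= alpha%:E)%E.
Proof.
move=> /andP [alpha_gt0 alpha_lt1] m_gt0 S_meas w_bounds phat_meas phat01 Zs_iid C_nested.
have w_gt0 c : 0 < w c by case/andP: (w_bounds c).
have phat_ge0 c x : 0 <= phat c x by case/andP: (phat01 c x).
pose H j omega := oracle_weight alpha S w phat j (test n j) (fun l => (Xs l omega, Ys l omega)).
pose c := alpha * n.+1%:R / m%:R.
have c_ge0 : 0 <= c by rewrite divr_ge0 // mulr_ge0 // ltW.
have H_ge0 j omega : (0 <= (H j omega)%:E)%E by rewrite lee_fin oracle_weight_ge0.
have H_meas j : measurable_fun setT (fun omega => (H j omega)%:E).
  exact/measurable_EFinP/(measurable_oracle_weight_sample alpha w S_meas phat_meas Zs_iid j (test n j)).
have FDP_ge0E omega : (0 <= (FDP n m alpha S w phat (Xs^~ omega) (Ys^~ omega))%:E)%E.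
  by rewrite lee_fin FDP_ge0.
have FDP_le omega : ((FDP n m alpha S w phat (Xs^~ omega) (Ys^~ omega))%:E
    <= c%:E * \sum_(j < m) (H j omega)%:E)%E.
  by rewrite sumEFin -EFinM lee_fin; exact: FDP_le_oracle_weights.
apply: le_trans (ge0_le_integralT Pr FDP_ge0E FDP_le) _.
rewrite ge0_integralZl_EFin //; last 2 first.
- by move=> omega _; rewrite sume_ge0.
- exact: emeasurable_sum.
rewrite ge0_integral_sum //.
have sum_le : (\sum_(j < m) \int[Pr]_(omega in setT) (H j omega)%:E
    <= \sum_(j < m) (n.+1%:R^-1)%:E)%E.
  by apply: lee_sum => j _; exact: integral_oracle_weight_test S_meas phat_meas Zs_iid j.
apply: le_trans (lee_wpmul2l _ sum_le) _; first by rewrite lee_fin.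
rewrite sumEFin sumr_const card_ord -EFinM lee_fin /c -mulr_natr le_eqVlt.
apply/orP; left; apply/eqP; field.
by rewrite addrC natr1 !pnatr_eq0 -!lt0n m_gt0.
Qed.
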